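(* Let $\Lambda$ be a full-rank lattice in $\mathbb{R}^n$ with successive minima $\lambda_1,\dots,\lambda_n$. Then there exists a basis $\boldsymbol{v}^1,\dots,\boldsymbol{v}^n$ of $\Lambda$ such that (i) $|\boldsymbol{v}^s|_2\ll_n\lambda_s$ for $s=1,\dots,n$ (implied constant depending only on $n$); and (ii) $\mathfrak{I}(\boldsymbol{v}^s)\subseteq\mathfrak{I}(\boldsymbol{v}^{s+1})$ for $s=1,\dots,n-1$.
   Context: For $\boldsymbol{v}\in\mathbb{R}^n$, $\mathfrak{I}(\boldsymbol{v}):=\{h\in\{1,\dots,n\}:v_h\neq0\}$ is the set of indices of nonzero coordinates. $|\cdot|_2$ is the Euclidean norm. The $s$-th successive minimum of $\Lambda$ is the infimum of $r>0$ such that $\Lambda\cap B(\boldsymbol{0},r)$ contains $s$ linearly independent vectors. A basis of $\Lambda$ means linearly independent vectors generating $\Lambda$ as an abelian group. *)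

From HB Require Import structures.
From mathcomp Require Import all_boot all_order all_algebra.
From mathcomp Require Import boolp classical_sets reals.
Set Implicit Arguments. Unset Strict Implicit. Unset Printing Implicit Defensive.
Import Order.TTheory GRing.Theory Num.Theory.
Local Open Scope ring_scope.
Local Open Scope classical_set_scope.

Definition euclid (R : realType) (n : nat) (v : 'rV[R]_n) : R :=
  Num.sqrt (\sum_(i < n) v 0 i ^+ 2).

Definition nzidx (R : realType) (n : nat) (v : 'rV[R]_n) : set 'I_n :=
  [set h | v 0 h != 0].

Definition lattice (R : realType) (n : nat) (B : 'M[R]_n) : set 'rV[R]_n :=
  [set v | exists z : 'rV[int]_n, v = map_mx (fun x : int => x%:~R) z *m B].

Definition succ_min (R : realType) (n : nat) (L : set 'rV[R]_n) (k : nat) : R :=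
  inf [set r : R | 0 < r /\
        exists w : 'I_k -> 'rV[R]_n,
          (forall i, L (w i) /\ euclid (w i) < r) /\
          row_free (\matrix_(i < k) w i)].

Definition is_lattice_basis (R : realType) (n : nat) (L : set 'rV[R]_n)
    (V : 'M[R]_n) : Prop :=
  row_free V /\ (forall s : 'I_n, L (row s V)) /\
  (forall v, L v -> exists z : 'rV[int]_n,
       v = map_mx (fun x : int => x%:~R) z *m V).

(* Pick independent lattice vectors w_0, ..., w_(n-1) with |w_k| < 2 lambda_(k+1).
   Writing W = M B with M integral, a factorisation M = T U with T lower triangular
   and U unimodular gives a basis U B in which w_k only involves the first k + 1
   vectors; size reduction (subtracting integral multiples of the w_j) then bounds
   the k-th basis vector by the sum of the |w_j| with j <= k.  Finally the supports
   are nested by replacing v_(k+1) with v_(k+1) + m v'_k, where the shift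
   0 <= m <= n is chosen so that no nonzero coordinate of v'_k cancels; this costs a
   factor n + 1 per step.  All changes of basis are unimodular integer matrices. *)

From HB Require Import structures.
From mathcomp Require Import all_boot all_order all_algebra.
From mathcomp Require Import boolp classical_sets reals.
From mathcomp Require Import lra.
Set Implicit Arguments. Unset Strict Implicit. Unset Printing Implicit Defensive.
Import Order.TTheory GRing.Theory Num.Theory.
Local Open Scope ring_scope.
Local Open Scope classical_set_scope.

Local Notation "M %:~M" := (map_mx intr M) (at level 2, format "M %:~M").

Section Norms.
Variables (R : realType) (n : nat).
Implicit Types (u v : 'rV[R]_n).

Definition norm1 v : R := \sum_i `|v 0 i|.

Lemma norm1_ge0 v : 0 <= norm1 v.
Proof. exact: sumr_ge0. Qed.

Lemma norm1D u v : norm1 (u + v) <= norm1 u + norm1 v.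
Proof. by rewrite -big_split; apply: ler_sum => i _; rewrite mxE ler_normD. Qed.

Lemma norm1Z (a : R) v : norm1 (a *: v) = `|a| * norm1 v.
Proof. by rewrite mulr_sumr; apply: eq_bigr => i _; rewrite mxE normrM. Qed.

Lemma norm1_sum (I : finType) (F : I -> 'rV[R]_n) :
  norm1 (\sum_i F i) <= \sum_i norm1 (F i).
Proof.
rewrite /norm1 exchange_big /=; apply: ler_sum => h _.
by rewrite summxE; apply: ler_norm_sum.
Qed.

Lemma euclid_ge0 v : 0 <= euclid v.
Proof. exact: sqrtr_ge0. Qed.

Lemma coord_le_euclid v i : `|v 0 i| <= euclid v.
Proof.
rewrite -sqrtr_sqr ler_sqrt; last by apply: sumr_ge0 => j _; apply: sqr_ge0.
by rewrite (bigD1 i) //= lerDl; apply: sumr_ge0 => j _; apply: sqr_ge0.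
Qed.

Lemma euclid_le_norm1 v : euclid v <= norm1 v.
Proof.
rewrite -(ger0_norm (norm1_ge0 v)) -sqrtr_sqr ler_sqrt ?sqr_ge0 //.
rewrite expr2 mulr_suml; apply: ler_sum => i _.
rewrite -[v 0 i ^+ 2]ger0_norm ?sqr_ge0 // normrX expr2 ler_wpM2l //.
by rewrite /norm1 (bigD1 i) //= lerDl; apply: sumr_ge0.
Qed.

Lemma norm1_le_euclid v : norm1 v <= n%:R * euclid v.
Proof.
rewrite mulr_natl -[n in _ *+ n]card_ord -sumr_const.
by apply: ler_sum => i _; apply: coord_le_euclid.
Qed.

End Norms.

Section TriangularMatrices.
Variables (R : comUnitRingType) (n : nat).
Implicit Types A B : 'M[R]_n.

Definition strict_trig_mx A := forall i j : 'I_n, (i <= j)%N -> A i j = 0.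

Lemma mulmx_trig_diag A B i :
  is_trig_mx A -> is_trig_mx B -> (A *m B) i i = A i i * B i i.
Proof.
move=> /is_trig_mxP trigA /is_trig_mxP trigB; rewrite mxE (bigD1 i) //= big1 ?addr0 //.
move=> k /negPf ki; have [lt_ik|lt_ki] := ltnP i k; first by rewrite trigA ?mul0r.
by rewrite trigB ?mulr0 // ltn_neqAle lt_ki andbT; apply: contraFN ki => /eqP /val_inj ->.
Qed.

Lemma strict_trig_mulmx A B : strict_trig_mx A -> is_trig_mx B -> strict_trig_mx (A *m B).
Proof.
move=> strictA /is_trig_mxP trigB i j le_ij; rewrite mxE big1 // => k _.
have [lt_ki|le_ik] := ltnP k i; first by rewrite trigB ?mulr0 // (leq_trans lt_ki).
by rewrite strictA ?mul0r.
Qed.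

Lemma unitmx_1B_strict_trig A : strict_trig_mx A -> 1%:M - A \in unitmx.
Proof.
move=> strictA; have trig1A : is_trig_mx (1%:M - A).
  apply/is_trig_mxP => i j lt_ij.
  by rewrite !mxE strictA ?(ltnW lt_ij) // -val_eqE /= ltn_eqF ?subr0.
rewrite unitmxE det_trig // big1 ?unitr1 // => i _.
by rewrite !mxE eqxx strictA ?subr0.
Qed.

Lemma trig_invmx A : is_trig_mx A -> is_trig_mx (invmx A).
Proof.
elim/trigsqmx_ind => [|k x c B trigB IH]; first by apply/is_trig_mxP => -[].
have [uM|/invmx_out->] := boolP (block_mx x 0 c B \in unitmx); last first.
  by rewrite is_trig_block_mx // eqxx mx11_is_trig.
have /andP[ux uB] : (x \in unitmx) && (B \in unitmx).
  by rewrite !unitmxE -unitrM -(det_lblock x c) -unitmxE.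
pose X := block_mx (invmx x) 0 (- (invmx B *m c *m invmx x)) (invmx B).
have XM : X *m block_mx x 0 c B = 1%:M.
  rewrite mulmx_block !mul0mx !mulmx0 !addr0 add0r mulVmx // mulNmx -!mulmxA.
  by rewrite mulVmx // mulVmx // mulmx1 addNr -scalar_mx_block.
suff -> : invmx (block_mx x 0 c B) = X by rewrite is_trig_block_mx // eqxx mx11_is_trig IH.
by rewrite -[LHS]mul1mx -XM -mulmxA mulmxV // mulmx1.
Qed.

End TriangularMatrices.

Section IntegerMatrices.
Variables (R : comUnitRingType) (n : nat) (U : 'M[int]_n).
Hypothesis uU : U \in unitmx.

Lemma map_intr_unitmx : (U%:~M : 'M[R]_n) \in unitmx.
Proof. by move: uU; rewrite !unitmxE det_map_mx; apply: rmorph_unit. Qed.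

Lemma map_intr_invmx : (invmx U)%:~M = invmx (U%:~M : 'M[R]_n).
Proof.
rewrite -[LHS]mul1mx -(mulVmx map_intr_unitmx) -mulmxA -map_mxM.
by rewrite mulmxV // map_mx1 mulmx1.
Qed.

End IntegerMatrices.

Lemma map_intr_trig (R : pzRingType) n (T : 'M[int]_n) :
  is_trig_mx T -> is_trig_mx (T%:~M : 'M[R]_n).
Proof. by move=> /is_trig_mxP trigT; apply/is_trig_mxP => i j /trigT; rewrite mxE => ->. Qed.

Lemma strict_trig_fixpoint_mx (R : comUnitRingType) n (N : 'M[int]_n) (V V' : 'M[R]_n) :
  strict_trig_mx N -> V' = V + N%:~M *m V' ->
  exists2 L : 'M[int]_n, L \in unitmx & V' = L%:~M *m V.
Proof.
move=> strictN defV'; have u1N := unitmx_1B_strict_trig strictN.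
exists (invmx (1%:M - N)); first by rewrite unitmx_inv.
rewrite map_intr_invmx //; apply: (canRL (mulKmx (map_intr_unitmx _ u1N))).
by rewrite map_mxB map_mx1 mulmxBl mul1mx {1}defV' addrK.
Qed.

Lemma int_trig_decomposition n (M : 'M[int]_n) :
  exists T U, [/\ is_trig_mx T, U \in unitmx & M = T *m U].
Proof.
elim: n M => [|n IH] M.
  by exists M, 1%:M; rewrite mulmx1 unitmx1; split=> //; apply/is_trig_mxP => -[].
(* The Smith form of the first row gives [Q] with [usubmx M *m invmx Q] zero
   outside its first entry. *)
have [L _ [Q uQ [d _ dM]]] := int_Smith_normal_form (usubmx (M : 'M_(1 + n))).
pose M' : 'M_(1 + n) := M *m invmx Q.
have ur0 : ursubmx M' = 0.
  rewrite /ursubmx -mul_usub_mx dM mulmxK // -mulmx_rsub.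
  apply/matrixP => i j; rewrite !mxE big1 // => k _.
  by rewrite !mxE !ord1 /= mulr0n mulr0.
have [T' [U' [trigT' uU' defT']]] := IH (drsubmx M').
exists (block_mx (ulsubmx M') 0 (dlsubmx M') T'), (block_mx 1%:M 0 0 U' *m Q).
rewrite -[n.+1]/(1 + n)%N; split.
- by rewrite is_trig_block_mx // eqxx mx11_is_trig.
- by rewrite unitmx_mul uQ andbT unitmxE det_lblock det1 mul1r -unitmxE.
- rewrite mulmxA mulmx_block !mulmx0 !mul0mx !addr0 add0r !mulmx1 -defT' -ur0 submxK.
  by rewrite mulmxKV.
Qed.

Lemma size_reduction (R : archiRealFieldType) n (T : 'M[int]_n) :
  is_trig_mx T -> (T%:~M : 'M[R]_n) \in unitmx ->
  exists2 L : 'M[int]_n, L \in unitmx &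
    let D : 'M[R]_n := L%:~M *m invmx T%:~M in
    is_trig_mx D /\ forall i j, `|D i j| <= 1.
Proof.
move=> trigT uT; set C := invmx T%:~M.
have trigTR := map_intr_trig R trigT.
have trigC : is_trig_mx C by apply: trig_invmx.
have C_diag i : `|C i i| <= 1.
  have Tii : 1 <= `|(T i i)%:~R : R|.
    move: uT; rewrite unitmxE det_trig // unitfE => /prodf_neq0/(_ i isT).
    by rewrite mxE; apply: norm_intr_ge1; apply: intr_int.
  have := mulmx_trig_diag i trigC trigTR; rewrite mulVmx // !mxE eqxx.
  move=> /(congr1 Num.norm); rewrite normr1 normrM => ->.
  by rewrite ler_peMr.
(* With [L = 1 - F T], [D] is [C - F]: the fractional parts of [C] below the diagonal. *)
pose F : 'M[int]_n := \matrix_(i, j) if (j < i)%N then Num.floor (C i j) else 0.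
have strictF : strict_trig_mx F by move=> i j le_ij; rewrite mxE ltnNge le_ij.
exists (1%:M - F *m T); first exact/unitmx_1B_strict_trig/strict_trig_mulmx.
rewrite /= map_mxB map_mx1 map_mxM mulmxBl mul1mx mulmxK //; split.
  apply/is_trig_mxP => i j lt_ij.
  by rewrite !mxE (is_trig_mxP trigC) // ltnNge (ltnW lt_ij) subr0.
move=> i j; rewrite !mxE; case: ltngtP => [lt_ji|lt_ij|/val_inj ->].
- have /andP[le_floor lt_floor] := floor_itv (C i j).
  by rewrite ger0_norm ?subr_ge0 // lerBlDl; rewrite intrD in lt_floor; exact: ltW.
- by rewrite (is_trig_mxP trigC) // subr0 normr0.
- by rewrite subr0.
Qed.

Lemma norm1_row_trig_mulmx (R : realType) n (D W : 'M[R]_n) (k : 'I_n) b :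
  is_trig_mx D -> (forall i j, `|D i j| <= 1) ->
  (forall j : 'I_n, (j <= k)%N -> norm1 (row j W) <= b) ->
  norm1 (row k (D *m W)) <= n%:R * b.
Proof.
move=> /is_trig_mxP trigD D_le1 Wb; have b_ge0 := le_trans (norm1_ge0 _) (Wb k (leqnn k)).
rewrite row_mul mulmx_sum_row; apply: le_trans (norm1_sum _) _.
rewrite mulr_natl -[n in _ *+ n]card_ord -sumr_const; apply: ler_sum => j _.
rewrite norm1Z mxE; have [le_jk|lt_kj] := leqP j k; last by rewrite trigD ?normr0 ?mul0r.
by rewrite -[b]mul1r ler_pM ?norm1_ge0 ?Wb.
Qed.

Section NestedSupports.
Variables (R : realType) (n : nat).
Implicit Types x y : 'rV[R]_n.

Lemma support_shift_subproof x y :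
  exists m : 'I_n.+1, [forall h, (x 0 h != 0) ==> (y 0 h + m%:R * x 0 h != 0)].
Proof.
(* Each [h] with [x 0 h != 0] rules out at most one of the [n.+1] shifts. *)
apply/existsP; apply: contraT; rewrite negb_exists => /forallP bad.
have /fin_all_exists[f hf] : forall m : 'I_n.+1,
    exists h, (x 0 h != 0) && (y 0 h + m%:R * x 0 h == 0).
  move=> m; have := bad m; rewrite negb_forall => /existsP[h].
  by rewrite negb_imply negbK; exists h.
suff /leq_card : injective f by rewrite !card_ord ltnn.
move=> m1 m2 f12; have /andP[x1 /eqP e1] := hf m1; have /andP[_ /eqP e2] := hf m2.
rewrite -f12 in e2; apply/val_inj/eqP; rewrite -(eqr_nat R) -(inj_eq (mulIf x1)).
by rewrite -(inj_eq (addrI (y 0 (f m1)))) e1 e2.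
Qed.

Definition support_shift x y : nat := xchoose (support_shift_subproof x y).

Lemma support_shift_le x y : (support_shift x y <= n)%N.
Proof. by rewrite -ltnS ltn_ord. Qed.

Lemma nzidx_support_shift x y : nzidx x `<=` nzidx (y + (support_shift x y)%:R *: x).
Proof.
move=> h /= xh; have /forallP/(_ h) := xchooseP (support_shift_subproof x y).
by rewrite xh /nzidx /= !mxE.
Qed.

Variable v : nat -> 'rV[R]_n.

Fixpoint nested k :=
  if k is k'.+1 then v k + (support_shift (nested k') (v k))%:R *: nested k' else v 0.

Lemma nzidx_nested k : nzidx (nested k) `<=` nzidx (nested k.+1).
Proof. exact: nzidx_support_shift. Qed.

Lemma norm1_nested k b :
  (forall j, (j <= k)%N -> norm1 (v j) <= b) -> norm1 (nested k) <= n.+1%:R ^+ k * b.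
Proof.
elim: k => [|k IH] vb /=; first by rewrite expr0 mul1r vb.
have b_ge0 : 0 <= b := le_trans (norm1_ge0 _) (vb 0%N isT).
have IHk := IH (fun j le_jk => vb j (leqW le_jk)).
apply: (le_trans (norm1D _ _)); rewrite norm1Z ger0_norm // exprS.
set P := n.+1%:R ^+ k in IHk *; set s := (support_shift _ _)%:R.
have P_ge1 : 1 <= P by rewrite exprn_ege1 // ler1n.
have s_le : s <= n%:R by rewrite ler_nat support_shift_le.
have := vb k.+1 (leqnn _); have := norm1_ge0 (nested k); have := ler0n R n.
rewrite -natr1; nra.
Qed.

End NestedSupports.

Lemma nested_rows_mx (R : realType) n (V : 'M[R]_n) :
  exists2 L : 'M[int]_n, L \in unitmx &
    (forall s t : 'I_n, t = s.+1 :> nat ->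
       nzidx (row s (L%:~M *m V)) `<=` nzidx (row t (L%:~M *m V))) /\
    (forall (s : 'I_n) b, (forall j : 'I_n, (j <= s)%N -> norm1 (row j V) <= b) ->
       norm1 (row s (L%:~M *m V)) <= n.+1%:R ^+ s * b).
Proof.
case: n V => [|n] V; first by exists 1%:M; [exact: unitmx1 | split=> -[]].
pose v j := row (inord j) V.
have vE (k : 'I_n.+1) : v k = row k V by rewrite /v inord_val.
pose V' := \matrix_(k < n.+1) nested v k.
pose N : 'M[int]_n.+1 := \matrix_(k, j)
  if k == j.+1 :> nat then (support_shift (nested v j) (v k))%:Z else 0.
have strictN : strict_trig_mx N by move=> k j le_kj; rewrite mxE ltn_eqF.
have defV' : V' = V + N%:~M *m V'.
  apply/row_matrixP => k; rewrite linearD /= row_mul rowK mulmx_sum_row -vE.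
  case: k => [[|k] lt_k] /=.
    by rewrite big1 ?addr0 // => j _; rewrite !mxE scale0r.
  rewrite (bigD1 (inord k)) //= big1 ?addr0 => [|j]; last first.
    move=> jk; rewrite !mxE eqSS; case: eqP => [kj|_]; last by rewrite scale0r.
    by rewrite kj inord_val eqxx in jk.
  by rewrite !mxE inordK 1?ltnW // eqxx pmulrn rowK inordK 1?ltnW.
have [L uL defL] := strict_trig_fixpoint_mx strictN defV'.
exists L => //; rewrite -defL; split=> [s t ts | s b Vb]; rewrite !rowK.
  by rewrite ts; apply: nzidx_nested.
apply: norm1_nested => j le_js; rewrite /v; apply: Vb.
by rewrite inordK // (leq_ltn_trans le_js).
Qed.

Lemma row_free_rowsub (F : fieldType) m1 m2 n (f : 'I_m2 -> 'I_m1) (A : 'M[F]_(m1, n)) :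
  injective f -> row_free A -> row_free (rowsub f A).
Proof.
move=> injf freeA; apply/inj_row_free => v.
rewrite -[A in rowsub f A]mul1mx -mul_rowsub_mx mulmxA -(mul0mx _ A).
move=> /(row_free_inj freeA) vf0; apply/rowP => j.
have := congr1 (fun u : 'rV_m1 => u 0 (f j)) vf0; rewrite !mxE (bigD1 j) //= big1.
  by rewrite !mxE eqxx mulr1 addr0.
by move=> l /negPf lj; rewrite !mxE (inj_eq injf) lj mulr0.
Qed.

Lemma row_free_row_neq0 (F : fieldType) m n (A : 'M[F]_(m, n)) i :
  row_free A -> row i A != 0.
Proof.
move=> /(row_free_rowsub (f := fun _ : 'I_1 => i)); rewrite -rowEsub /row_free rank_rV eqb1.
by apply; move=> j k _; rewrite !ord1.
Qed.

Lemma exists_row_notin_submx (F : fieldType) m1 m2 n (A : 'M[F]_(m1, n)) (B : 'M[F]_(m2, n)) :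
  row_free A -> (\rank B < m1)%N -> exists i, ~~ (row i A <= B)%MS.
Proof.
move=> freeA rkB; apply/existsP; move: rkB; apply: contraLR.
rewrite negb_exists -leqNgt => /forallP AB.
by rewrite -(eqP freeA) mxrankS //; apply/row_subP => i; apply/negPn/AB.
Qed.

Lemma ltn_mxrank_adds (F : fieldType) m n (A : 'M[F]_(m, n)) (v : 'rV[F]_n) :
  ~~ (v <= A)%MS -> (\rank A < \rank (A + v)%MS)%N.
Proof.
move=> vA; have /leqifP := mxrank_leqif_sup (addsmxSl A v).
by case: ifP => // /(submx_trans (addsmxSr A v)) vA'; rewrite vA' in vA.
Qed.

Lemma greedy_free_rows (F : fieldType) n (P : nat -> 'rV[F]_n -> Prop) :
  (forall k, (k < n)%N -> exists w : 'I_k.+1 -> 'rV[F]_n,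
     (forall i, P k (w i)) /\ row_free (\matrix_i w i)) ->
  exists W : 'M[F]_n, row_free W /\ forall k : 'I_n, P k (row k W).
Proof.
move=> hP; suff [f [fP free_f]] : exists f : nat -> 'rV[F]_n,
    (forall k, (k < n)%N -> P k (f k)) /\ row_free (\matrix_(k < n) f k).
  by exists (\matrix_(k < n) f k); split=> // k; rewrite rowK; apply: fP.
suff : forall m, (m <= n)%N -> exists f : nat -> 'rV[F]_n,
    (forall k, (k < m)%N -> P k (f k)) /\ row_free (\matrix_(k < m) f k) by apply.
elim=> [_|m IH lt_mn].
  by exists (fun=> 0); split=> //; rewrite /row_free -leqn0 rank_leq_row.
have [f [fP free_f]] := IH (ltnW lt_mn); have [w [wP free_w]] := hP m lt_mn.
set Fm := \matrix_(k < m) f k.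
have rk_Fm : (\rank Fm < m.+1)%N by rewrite (eqP free_f).
have [j] := exists_row_notin_submx free_w rk_Fm; rewrite rowK => wFm.
pose f' k := if k == m then w j else f k.
exists f'; split=> [k|].
  rewrite ltnS leq_eqVlt /f' => /orP[/eqP->|lt_km]; first by rewrite eqxx.
  by rewrite ltn_eqF //; apply: fP.
have sub : (Fm + w j <= \matrix_(k < m.+1) f' k)%MS.
  rewrite addsmx_sub; apply/andP; split.
    apply/row_subP => k; rewrite rowK.
    have -> : f k = row (widen_ord (leqnSn m) k) (\matrix_(k < m.+1) f' k).
      by rewrite rowK /f' /= ltn_eqF.
    exact: row_sub.
  have -> : w j = row ord_max (\matrix_(k < m.+1) f' k) by rewrite rowK /f' /= eqxx.
  exact: row_sub.
rewrite -row_leq_rank; apply: leq_trans (mxrankS sub).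
by have := ltn_mxrank_adds wFm; rewrite (eqP free_f).
Qed.

Definition free_radii (R : realType) n (L : set 'rV[R]_n) k : set R :=
  [set r : R | 0 < r /\ exists w : 'I_k -> 'rV[R]_n,
     (forall i, L (w i) /\ euclid (w i) < r) /\ row_free (\matrix_(i < k) w i)].

Lemma succ_minE (R : realType) n (L : set 'rV[R]_n) k :
  succ_min L k = inf (free_radii L k).
Proof. by []. Qed.

Lemma free_radiiW (R : realType) n (L : set 'rV[R]_n) i k r :
  (i <= k)%N -> free_radii L k r -> free_radii L i r.
Proof.
move=> le_ik [r_gt0 [w [Lw free_w]]]; split=> //.
exists (fun j => w (widen_ord le_ik j)); split=> [j|]; first exact: Lw.
have -> : \matrix_(j < i) w (widen_ord le_ik j) = rowsub (widen_ord le_ik) (\matrix_j w j).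
  by apply/matrixP => ? ?; rewrite !mxE.
by apply: (row_free_rowsub _ free_w) => j1 j2 [] /val_inj.
Qed.

Section LatticeGeometry.
Variables (R : realType) (n : nat) (B : 'M[R]_n).
Hypothesis uB : B \in unitmx.

Lemma lattice_rows_mx (W : 'M[R]_n) :
  (forall k, lattice B (row k W)) -> exists M : 'M[int]_n, W = M%:~M *m B.
Proof.
move=> Wrows; have /fin_all_exists[z Ez] :
    forall k, exists z : 'rV[int]_n, row k W = z%:~M *m B.
  by move=> k; have [z ->] := Wrows k; exists z.
exists (\matrix_(k, j) z k 0 j); apply/row_matrixP => k.
by rewrite row_mul Ez -map_row; congr (_%:~M *m B); apply/rowP => j; rewrite !mxE.
Qed.

Lemma lattice_basis_mul (U : 'M[int]_n) :
  U \in unitmx -> is_lattice_basis (lattice B) (U%:~M *m B).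
Proof.
move=> uU; split; [|split].
- by rewrite row_free_unit unitmx_mul map_intr_unitmx.
- by move=> s; exists (row s U); rewrite row_mul map_row.
- move=> _ [z ->]; exists (z *m invmx U).
  by rewrite map_mxM map_intr_invmx // !mulmxA mulmxKV ?map_intr_unitmx.
Qed.

Lemma lattice_norm_lb :
  exists2 eps : R, 0 < eps & forall v, lattice B v -> v != 0 -> eps <= euclid v.
Proof.
pose C := invmx B; pose S := 1 + \sum_i \sum_j `|C i j|.
have S_gt0 : 0 < S by rewrite ltr_pwDl //; do 2!apply: sumr_ge0 => ? _.
exists S^-1; first by rewrite invr_gt0.
move=> _ [z ->] nz.
have /existsP[j zj] : [exists j, z 0 j != 0].
  apply: contraNT nz; rewrite negb_exists => /forallP z0.
  suff -> : z = 0 by rewrite map_mx0 mul0mx.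
  by apply/rowP => j; rewrite mxE; apply/eqP; rewrite -[_ == _]negbK z0.
set v := _ *m B.
have zj1 : 1 <= `|(z 0 j)%:~R : R| by apply: norm_intr_ge1; rewrite ?intr_int ?intr_eq0.
rewrite -[S^-1]mul1r ler_pdivrMr //; apply: (le_trans zj1).
have -> : (z 0 j)%:~R = (v *m C) 0 j by rewrite mulmxK // mxE.
rewrite mxE; apply: (le_trans (ler_norm_sum _ _ _)).
apply: (@le_trans _ _ (\sum_i euclid v * `|C i j|)).
  by apply: ler_sum => i _; rewrite normrM ler_wpM2r ?coord_le_euclid.
rewrite -mulr_sumr ler_wpM2l ?euclid_ge0 // ler_wpDl //.
by apply: ler_sum => i _; rewrite (bigD1 j) //= lerDl sumr_ge0.
Qed.

Lemma free_radii_lattice_neq0 k : (k <= n)%N -> free_radii (lattice B) k !=set0.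
Proof.
move=> le_kn; apply: (@subset_nonempty _ (free_radii (lattice B) n)).
  by move=> r; apply: free_radiiW.
exists (1 + \sum_j euclid (row j B)); split.
  by rewrite ltr_pwDl // sumr_ge0 // => j _; apply: euclid_ge0.
exists (fun j => row j B); split=> [i|].
  split; first by exists (delta_mx 0 i); rewrite map_delta_mx -rowE.
  rewrite (bigD1 i) //=.
  have : 0 <= \sum_(j | j != i) euclid (row j B) by apply: sumr_ge0 => j _; apply: euclid_ge0.
  lra.
have -> : \matrix_j row j B = B by apply/matrixP => i j; rewrite !mxE.
by rewrite row_free_unit.
Qed.

Lemma succ_min_gt0 k : (0 < k <= n)%N -> 0 < succ_min (lattice B) k.
Proof.
move=> /andP[k_gt0 le_kn]; have [eps eps_gt0 eps_lb] := lattice_norm_lb.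
rewrite succ_minE; apply: (lt_le_trans eps_gt0).
apply: lb_le_inf (free_radii_lattice_neq0 le_kn) _.
move=> r [_ [w [Lw free_w]]]; have [Lw0 w0_lt] := Lw (Ordinal k_gt0).
have := row_free_row_neq0 (Ordinal k_gt0) free_w; rewrite rowK => w0_neq0.
exact: le_trans (eps_lb _ Lw0 w0_neq0) (ltW w0_lt).
Qed.

Lemma succ_min_le i k : (i <= k <= n)%N -> succ_min (lattice B) i <= succ_min (lattice B) k.
Proof.
move=> /andP[le_ik le_kn]; rewrite !succ_minE.
apply: lb_le_inf (free_radii_lattice_neq0 le_kn) _.
move=> r /(free_radiiW le_ik) r_i; apply: ge_inf r_i.
by exists 0 => x [/ltW].
Qed.

Lemma succ_min_approx k r : (k <= n)%N -> succ_min (lattice B) k < r ->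
  exists w : 'I_k -> 'rV[R]_n,
    (forall i, lattice B (w i) /\ euclid (w i) < r) /\ row_free (\matrix_(i < k) w i).
Proof.
rewrite succ_minE => /free_radii_lattice_neq0 /inf_lt lt_inf.
move=> /lt_inf [s [_ [w [Lw free_w]]] lt_sr].
exists w; split=> // i; have [Lwi wi_lt] := Lw i; split=> //; exact: lt_trans lt_sr.
Qed.

Lemma short_free_lattice_mx : exists W : 'M[R]_n, row_free W /\
  forall k : 'I_n, lattice B (row k W) /\ euclid (row k W) < 2 * succ_min (lattice B) k.+1.
Proof.
pose P k v := lattice B v /\ euclid v < 2 * succ_min (lattice B) k.+1.
apply: (@greedy_free_rows _ _ P) => k lt_kn; apply: succ_min_approx => //.
by rewrite ltr_pMl ?ltr1n // succ_min_gt0.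
Qed.

Lemma short_lattice_basis : exists2 U : 'M[int]_n, U \in unitmx &
  forall k : 'I_n, norm1 (row k (U%:~M *m B)) <= n%:R ^+ 2 * (2 * succ_min (lattice B) k.+1).
Proof.
have [W [freeW Wshort]] := short_free_lattice_mx.
have [M defW] := lattice_rows_mx (fun k => (Wshort k).1).
have [T [U [trigT uU defM]]] := int_trig_decomposition M.
have uT : (T%:~M : 'M[R]_n) \in unitmx.
  by move: freeW; rewrite row_free_unit defW defM map_mxM -mulmxA unitmx_mul => /andP[].
have [L uL [trigD D_le1]] := size_reduction trigT uT.
exists (L *m U) => [|k]; first by rewrite unitmx_mul uL.
have -> : (L *m U)%:~M *m B = (L%:~M *m invmx T%:~M) *m W.
  by rewrite defW defM !map_mxM !mulmxA mulmxKV.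
rewrite expr2 -mulrA; apply: norm1_row_trig_mulmx => // j le_jk.
apply: le_trans (norm1_le_euclid _) _; rewrite ler_wpM2l //.
apply: le_trans (ltW (Wshort j).2) _; rewrite ler_wpM2l // succ_min_le //.
by rewrite ltnS le_jk /=.
Qed.

End LatticeGeometry.

Theorem lemma3p2 (R : realType) (n : nat) :
  exists C : R, 0 < C /\
  forall B : 'M[R]_n, B \in unitmx ->
  exists V : 'M[R]_n,
    is_lattice_basis (lattice B) V /\
    (forall s : 'I_n, euclid (row s V) <= C * succ_min (lattice B) s.+1) /\
    (forall s t : 'I_n, nat_of_ord t = s.+1 ->
       nzidx (row s V) `<=` nzidx (row t V)).
Proof.
exists (2 * n.+1%:R ^+ n.+1); split; first by rewrite mulr_gt0 ?exprn_gt0.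
move=> B uB; have [U uU Ushort] := short_lattice_basis uB.
have [N uN [nestN boundN]] := nested_rows_mx (U%:~M *m B).
exists ((N *m U)%:~M *m B); rewrite map_mxM -mulmxA; split.
  by rewrite mulmxA -map_mxM; apply: (lattice_basis_mul uB); rewrite unitmx_mul uN.
split=> // s; apply: le_trans (euclid_le_norm1 _) _.
have lam_ge0 : 0 <= succ_min (lattice B) s.+1.
  by apply/ltW/(succ_min_gt0 uB); rewrite /= ltn_ord.
set lam := succ_min _ _ in lam_ge0 *.
apply: le_trans (boundN s (n%:R ^+ 2 * (2 * lam)) _) _.
  move=> j le_js; apply: le_trans (Ushort j) _; rewrite !ler_wpM2l ?exprn_ge0 //.
  by rewrite succ_min_le // ltnS le_js /=.
have : n.+1%:R ^+ s * n%:R ^+ 2 <= n.+1%:R ^+ n.+1 :> R.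
  apply: le_trans (_ : n.+1%:R ^+ s * n.+1%:R ^+ 2 <= _).
    by rewrite ler_wpM2l ?exprn_ge0 // lerXn2r ?ler_nat ?nnegrE.
  have n1_ge1 : 1 <= n.+1%:R :> R by rewrite ler1n.
  by rewrite -exprD; apply: (ler_weXn2l n1_ge1); rewrite addn2 ltnS ltn_ord.
nra.
Qed.
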